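(* Let $N\ge 1$ and, for $j=1,\ldots,n$, let $\mathsf{E}_j:\mathcal B(\mathbb R^{M_j})\to\mathcal L(\mathcal H^{\otimes N})$ be a Gaussian observable. Then the collection $\{\mathsf{E}_1,\ldots,\mathsf{E}_n\}$ is Gaussian compatible if and only if there exists a Gaussian observable $\mathsf{G}:\mathcal B(\mathbb R^M)\to\mathcal L(\mathcal H^{\otimes N})$, where $M=\sum_{j=1}^n M_j$ and $\mathbb R^M=\mathbb R^{M_1}\times\cdots\times\mathbb R^{M_n}$, which has the $\mathsf{E}_j$ as its margins, i.e. $\mathsf{E}_j(X)=\mathsf{G}(\mathbb R^{M_1}\times\cdots\times\mathbb R^{M_{j-1}}\times X\times\mathbb R^{M_{j+1}}\times\cdots\times\mathbb R^{M_n})$ for all $j$ and all Borel $X\subseteq\mathbb R^{M_j}$.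
   Context: $\mathcal H^{\otimes N}=L^2(\mathbb R^N)$ with canonical position and momentum operators $Q_j,P_j$, ${\bf R}=(Q_1,P_1,\ldots,Q_N,P_N)^T$, ${\bf \Omega}=\bigoplus_{j=1}^N\begin{pmatrix}0&1\\-1&0\end{pmatrix}$, and Weyl operators $W({\bf x})=e^{-i{\bf x}^T{\bf \Omega R}}$ for ${\bf x}\in\mathbb R^{2N}$. An observable is a POVM $\mathsf{E}:\mathcal B(\mathbb R^M)\to\mathcal L(\mathcal H^{\otimes N})$ ($\mathcal L$ = bounded operators). It is Gaussian if its Fourier transform is $\int e^{i{\bf p}^T{\bf x}}\,d\mathsf{E}({\bf x})=W({\bf Kp})e^{-\frac14{\bf p}^T{\bf Lp}-i{\bf m}^T{\bf p}}$ for all ${\bf p}\in\mathbb R^M$, where ${\bf K}$ is a real $2N\times M$ matrix, ${\bf L}$ a real $M\times M$ matrix with ${\bf L}-i{\bf K}^T{\bf \Omega K}\ge 0$, and ${\bf m}\in\mathbb R^M$; every such triple $({\bf K},{\bf L},{\bf m})$ determines a unique Gaussian observable. A Markov kernel $f:\mathcal B(\mathbb R^{M'})\times\mathbb R^M\to[0,1]$ is a map with $f(\cdot,{\bf x})$ a probability measure for each ${\bf x}$ and $f(X,\cdot)$ measurable for each $X$. It is a Gaussian postprocessing if there exist a real $M\times M'$ matrix ${\bf A}$, a real positive semidefinite $M'\times M'$ matrix ${\bf B}$ and ${\bf c}\in\mathbb R^{M'}$ such that $\int e^{i{\bf p}^T{\bf y}}f(d{\bf y},{\bf x})=e^{i({\bf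 Ap})^T{\bf x}}e^{-\frac14{\bf p}^T{\bf Bp}-i{\bf c}^T{\bf p}}$ for all ${\bf p}\in\mathbb R^{M'}$, ${\bf x}\in\mathbb R^M$; applying it to a Gaussian observable $\mathsf{G}$ with parameters $({\bf K},{\bf L},{\bf m})$ gives the observable $\mathsf{E}(X)=\int f(X,{\bf x})\,d\mathsf{G}({\bf x})$, which is Gaussian with parameters $({\bf KA},{\bf B}+{\bf A}^T{\bf LA},{\bf c}+{\bf A}^T{\bf m})$. A collection $\mathcal M$ of Gaussian observables (on the same Hilbert space) is Gaussian compatible if there is a Gaussian observable $\mathsf{G}$ such that every $\mathsf{E}\in\mathcal M$ is obtained from $\mathsf{G}$ via some Gaussian postprocessing. *)

From HB Require Import structures.
From mathcomp Require Import all_boot all_order all_algebra.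
From mathcomp Require Import reals.
From mathcomp Require Import complex.
Set Implicit Arguments. Unset Strict Implicit. Unset Printing Implicit Defensive.
Import Order.TTheory GRing.Theory Num.Theory.
Local Open Scope ring_scope.

(** Symplectic form Omega = (+)_{j=1}^N [[0,1],[-1,0]] on R^{2N}
    (indices 0..2N-1; rows/cols 2a, 2a+1 form the a-th block). *)
Definition Omega (R : ringType) (N : nat) : 'M[R]_(N.*2) :=
  \matrix_(i, k) (if ~~ odd i && (k == i.+1 :> nat) then 1
                  else if odd i && (i == k.+1 :> nat) then -1 else 0).

Definition cmx (R : rcfType) (m n : nat) (A : 'M[R]_(m, n)) : 'M[R[i]]_(m, n) :=
  map_mx (fun x : R => x%:C%C) A.

Definition psdC (R : rcfType) (n : nat) (H : 'M[R[i]]_n) : Prop :=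
  forall z : 'cV[R[i]]_n,
    0 <= \sum_(a < n) \sum_(b < n) ((z a 0)^* * H a b * z b 0).

Definition psdR (R : rcfType) (n : nat) (B : 'M[R]_n) : Prop :=
  B^T = B /\ forall u : 'cV[R]_n, 0 <= (u^T *m B *m u) 0 0.

(** Gaussian observable on H^{(x)N} with outcome space R^M, represented by its
    (unique) parameter triple (K, L, m) subject to L - i K^T Omega K >= 0.
    By the standing assumptions, Gaussian observables are in bijection with
    such triples (the Fourier transform W(Kp) e^{-p^T L p/4 - i m^T p}
    determines the POVM and vice versa). *)
Record gobs (R : rcfType) (N M : nat) := GObs {
  gK : 'M[R]_(N.*2, M);
  gL : 'M[R]_M;
  gm : 'cV[R]_M;
  gvalid : psdC (cmx gL - 'i%C *: cmx (gK^T *m Omega R N *m gK))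
}.

Definition gpost_of (R : rcfType) (N M M' : nat)
  (G : gobs R N M) (E : gobs R N M') : Prop :=
  exists (A : 'M[R]_(M, M')) (B : 'M[R]_M') (c : 'cV[R]_M'),
    psdR B /\
    gK E = gK G *m A /\
    gL E = B + A^T *m gL G *m A /\
    gm E = c + A^T *m gm G.

Definition gauss_compatible (R : rcfType) (N n : nat) (Ms : 'I_n -> nat)
  (E : forall j : 'I_n, gobs R N (Ms j)) : Prop :=
  exists (M : nat) (G : gobs R N M), forall j : 'I_n, gpost_of G (E j).

Definition offset (n : nat) (Ms : 'I_n -> nat) (j : 'I_n) : nat :=
  (\sum_(l < n | (l < j)%N) Ms l)%N.

(** Coordinate projection matrix pi_j : R^M -> R^{M_j}, written (as in the
    postprocessing convention x |-> A^T x) as the M x M_j matrix A = P_j. *)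
Definition blockP (R : ringType) (n : nat) (Ms : 'I_n -> nat) (j : 'I_n)
  : 'M[R]_(\sum_(l < n) Ms l, Ms j) :=
  \matrix_(a, k) (if (a == offset Ms j + k :> nat)%N then 1 else 0).

(** E is the j-th margin of G: E(X) = G(R^{M_1} x .. x X x .. x R^{M_n}),
    i.e. E is the image of G under the (deterministic, Gaussian) coordinate
    projection x |-> pi_j x; in parameters: (K P_j, P_j^T L P_j, P_j^T m). *)
Definition is_margin (R : rcfType) (N n : nat) (Ms : 'I_n -> nat)
  (G : gobs R N (\sum_(l < n) Ms l)) (j : 'I_n) (E : gobs R N (Ms j)) : Prop :=
  gK E = gK G *m blockP R Ms j /\
  gL E = (blockP R Ms j)^T *m gL G *m blockP R Ms j /\
  gm E = (blockP R Ms j)^T *m gm G.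

(* A margin is the postprocessing of the joint observable by a coordinate
   projection P_j (with B = 0, c = 0).  Conversely, if G postprocesses to each
   E_j with parameters (A_j, B_j, c_j), postprocess G once with
   A = sum_j A_j P_j^T, B = sum_j P_j B_j P_j^T and c = sum_j P_j c_j: since
   P_l^T P_j is the identity for l = j and zero otherwise, the j-th margin of
   the result is E_j.  The only analytic point is that postprocessing
   preserves validity, because L' - i K'^T Omega K' = B + A^T (L - i K^T Omega K) A
   is a sum of positive semidefinite matrices. *)
From mathcomp Require Import all_boot all_order all_algebra reals complex ring zify.
From mathcomp Require Import boolp.
Set Implicit Arguments. Unset Strict Implicit. Unset Printing Implicit Defensive.
Import Order.TTheory GRing.Theory Num.Theory.
Local Open Scope ring_scope.

Section PositiveSemidefinite.
Variable R : rcfType.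

Definition qform n (H : 'M[R[i]]_n) (z : 'cV[R[i]]_n) : R[i] :=
  ((map_mx Num.conj z)^T *m H *m z) 0 0.

Lemma psdC_qform n (H : 'M[R[i]]_n) : psdC H <-> forall z, 0 <= qform H z.
Proof.
suff qformE z : qform H z = \sum_(a < n) \sum_(b < n) ((z a 0)^* * H a b * z b 0).
  by split=> Hpsd z; [rewrite qformE | rewrite -qformE].
rewrite /qform mxE exchange_big; apply: eq_bigr => b _.
by rewrite mxE big_distrl; apply: eq_bigr => a _; rewrite !mxE.
Qed.

Lemma conj_cmx m n (A : 'M[R]_(m, n)) : map_mx Num.conj (cmx A) = cmx A.
Proof. by apply/matrixP=> a b; rewrite !mxE; apply: conjc_real. Qed.

Lemma cmxM m n p (A : 'M[R]_(m, n)) (B : 'M[R]_(n, p)) :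
  cmx (A *m B) = cmx A *m cmx B.
Proof. exact: map_mxM. Qed.

Lemma cmxT m n (A : 'M[R]_(m, n)) : cmx A^T = (cmx A)^T.
Proof. by apply/matrixP=> a b; rewrite !mxE. Qed.

Lemma cmxD m n (A B : 'M[R]_(m, n)) : cmx (A + B) = cmx A + cmx B.
Proof. exact: map_mxD. Qed.

Lemma psdC_congr m n (A : 'M[R]_(m, n)) (H : 'M[R[i]]_m) :
  psdC H -> psdC ((cmx A)^T *m H *m cmx A).
Proof.
move=> /psdC_qform Hpsd; apply/psdC_qform => z.
by have := Hpsd (cmx A *m z); rewrite /qform map_mxM conj_cmx trmx_mul !mulmxA.
Qed.

Lemma psdCD n (H1 H2 : 'M[R[i]]_n) : psdC H1 -> psdC H2 -> psdC (H1 + H2).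
Proof.
move=> /psdC_qform H1psd /psdC_qform H2psd; apply/psdC_qform => z.
rewrite /qform mulmxDr mulmxDl mxE; apply: addr_ge0; [exact: H1psd | exact: H2psd].
Qed.

(* For real symmetric B and z = x + i y, the cross terms x^T B y and y^T B x
   cancel, leaving z^* B z = x^T B x + y^T B y. *)
Lemma psdR_psdC n (B : 'M[R]_n) : psdR B -> psdC (cmx B).
Proof.
case=> Bsym Bpos; apply/psdC_qform => z.
set x := map_mx (@complex.Re R) z; set y := map_mx (@complex.Im R) z.
have zE : z = cmx x + 'i%C *: cmx y.
  by apply/matrixP=> a b; rewrite !mxE [LHS]complexE mulrC.
have conj_zE : map_mx Num.conj z = cmx x - 'i%C *: cmx y.
  by apply/matrixP=> a b; rewrite !mxE; case: (z a b) => p q /=; simpc.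
have cross_sym : (x^T *m B *m y) 0 0 = (y^T *m B *m x) 0 0.
  have scalar_tr (S : 'M[R]_1) : S 0 0 = S^T 0 0 by rewrite mxE.
  by rewrite [LHS]scalar_tr !trmx_mul Bsym trmxK mulmxA.
rewrite /qform conj_zE {1}zE; clearbody x y.
rewrite (_ : (cmx x - 'i%C *: cmx y)^T = (cmx x)^T - 'i%C *: (cmx y)^T); last first.
  by apply/matrixP=> a b; rewrite !mxE.
rewrite mulmxBl mulmxDr !mulmxBl.
rewrite -!scalemxAl -!scalemxAr -!cmxT -!cmxM.
move: cross_sym (Bpos x) (Bpos y); rewrite !mxE => ->.
set sx := \sum_j _ * x j 0; set sy := \sum_j _ * y j 0.
move=> sx_ge0 sy_ge0.
have ii : 'i%C * 'i%C = -1 :> R[i] by rewrite -expr2 sqr_i.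
rewrite mulrA ii (_ : _ + _ = (sx + sy)%:C%C); last by rewrite rmorphD /=; ring.
by rewrite ler0c addr_ge0.
Qed.

Lemma psdR0 n : psdR (0 : 'M[R]_n).
Proof. by split=> [|u]; rewrite ?trmx0 // mulmx0 mul0mx mxE. Qed.

Lemma psdRD n (B1 B2 : 'M[R]_n) : psdR B1 -> psdR B2 -> psdR (B1 + B2).
Proof.
case=> B1sym B1pos [B2sym B2pos]; split; first by rewrite linearD /= B1sym B2sym.
by move=> u; rewrite mulmxDr mulmxDl mxE; apply: addr_ge0.
Qed.

Lemma psdR_sum n I (r : seq I) (F : I -> 'M[R]_n) :
  (forall j, psdR (F j)) -> psdR (\sum_(j <- r) F j).
Proof. by move=> Fpsd; elim/big_rec: _ => [|j B _]; [exact: psdR0 | exact: psdRD]. Qed.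

Lemma psdR_congr m n (A : 'M[R]_(m, n)) (B : 'M[R]_n) :
  psdR B -> psdR (A *m B *m A^T).
Proof.
case=> Bsym Bpos; split; first by rewrite !trmx_mul trmxK Bsym mulmxA.
by move=> u; have := Bpos (A^T *m u); rewrite trmx_mul trmxK !mulmxA.
Qed.

End PositiveSemidefinite.

Section Postprocessing.
Variables (R : rcfType) (N M M' : nat) (G : gobs R N M).

Record gpost (E : gobs R N M') := GPost {
  gpA : 'M[R]_(M, M');
  gpB : 'M[R]_M';
  gpc : 'cV[R]_M';
  gpB_psd : psdR gpB;
  gpK : gK E = gK G *m gpA;
  gpL : gL E = gpB + gpA^T *m gL G *m gpA;
  gpm : gm E = gpc + gpA^T *m gm G
}.

Lemma gpost_of_gpost (E : gobs R N M') : gpost_of G E -> gpost E.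
Proof.
move=> /cid [A /cid [B /cid [c [Bpsd [EK [EL Em]]]]]]; exact: GPost Bpsd EK EL Em.
Qed.

Lemma gpost_of_linear (E : gobs R N M') (A : 'M[R]_(M, M')) :
    gK E = gK G *m A -> gL E = A^T *m gL G *m A -> gm E = A^T *m gm G ->
  gpost_of G E.
Proof.
move=> EK EL Em; exists A, 0, 0; split; first exact: psdR0.
by rewrite EK EL Em !add0r.
Qed.

Variables (A : 'M[R]_(M, M')) (B : 'M[R]_M') (c : 'cV[R]_M').
Hypothesis Bpsd : psdR B.

Lemma postprocess_valid :
  let K' := gK G *m A in
  psdC (cmx (B + A^T *m gL G *m A) - 'i%C *: cmx (K'^T *m Omega R N *m K')).
Proof.
rewrite /= cmxD -addrA; apply: psdCD; first exact: psdR_psdC.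
have -> : cmx (A^T *m gL G *m A) - 'i%C *: cmx ((gK G *m A)^T *m Omega R N *m (gK G *m A))
    = (cmx A)^T *m (cmx (gL G) - 'i%C *: cmx ((gK G)^T *m Omega R N *m gK G)) *m cmx A.
  by rewrite mulmxBr mulmxBl -scalemxAr -scalemxAl trmx_mul !cmxM !cmxT !mulmxA.
exact: psdC_congr (gvalid G).
Qed.

Definition postprocess : gobs R N M' :=
  @GObs R N M' (gK G *m A) (B + A^T *m gL G *m A) (c + A^T *m gm G) postprocess_valid.

End Postprocessing.

Section BlockProjections.
Variables (R : nzRingType) (n : nat) (Ms : 'I_n -> nat).
Local Notation P := (blockP R Ms).

Lemma offsetD_leq (j : 'I_n) (p : pred 'I_n) :
  (forall l : 'I_n, (l <= j)%N -> p l) ->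
  (offset Ms j + Ms j <= \sum_(l < n | p l) Ms l)%N.
Proof.
move=> lep; rewrite [X in (_ <= X)%N](bigID (fun l : 'I_n => (l < j)%N)) /=.
apply: leq_add.
  rewrite /offset big_mkcond [X in (_ <= X)%N]big_mkcond /= leq_sum // => l _.
  by case: ltnP => // /ltnW /lep ->.
by rewrite (bigD1 j) /= ?ltnn ?andbT ?lep ?leq_addr.
Qed.

Lemma offset_block_end (j : 'I_n) : (offset Ms j + Ms j <= \sum_(l < n) Ms l)%N.
Proof. exact: offsetD_leq. Qed.

Lemma offset_block_lt (l j : 'I_n) :
  (l < j)%N -> (offset Ms l + Ms l <= offset Ms j)%N.
Proof. by move=> lj; apply: offsetD_leq => i il; apply: leq_ltn_trans lj. Qed.

Lemma blockP_tr_mul_entry (l j : 'I_n) k k' :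
  ((P l)^T *m P j) k k' = (offset Ms l + k == offset Ms j + k')%:R.
Proof.
have lt_end : (offset Ms l + k < \sum_(l < n) Ms l)%N.
  by apply: leq_trans (offset_block_end l); rewrite ltn_add2l.
rewrite mxE (bigD1 (Ordinal lt_end)) //= !mxE /= (eqxx (offset Ms l + k)%N) mul1r.
rewrite big1 ?addr0; first by case: eqP.
move=> a /negP a_neq; rewrite !mxE; case: eqP => [a_eq|]; last by rewrite mul0r.
by case: a_neq; apply/eqP/val_inj.
Qed.

Lemma blockP_tr_mulxx (j : 'I_n) : (P j)^T *m P j = 1%:M.
Proof. by apply/matrixP=> k k'; rewrite blockP_tr_mul_entry eqn_add2l !mxE. Qed.

Lemma blockP_tr_mul_neq (l j : 'I_n) : l != j -> (P l)^T *m P j = 0.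
Proof.
move=> lj; apply/matrixP=> k k'; rewrite blockP_tr_mul_entry mxE.
case: eqP => // offset_eq; exfalso.
have := ltn_ord k; have := ltn_ord k'.
case: (ltngtP l j) => [lt|gt|/val_inj eq]; last by rewrite eq eqxx in lj.
- by have := offset_block_lt lt; lia.
- by have := offset_block_lt gt; lia.
Qed.

Lemma sum_mul_blockP p (F : forall j, 'M[R]_(p, Ms j)) (j : 'I_n) :
  (\sum_l (F l *m (P l)^T)) *m P j = F j.
Proof.
rewrite mulmx_suml (bigD1 j) //= -mulmxA blockP_tr_mulxx mulmx1 big1 ?addr0 //.
by move=> l lj; rewrite -mulmxA blockP_tr_mul_neq // mulmx0.
Qed.

Lemma blockP_tr_mul_sum p (F : forall j, 'M[R]_(Ms j, p)) (j : 'I_n) :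
  (P j)^T *m \sum_l (P l *m F l) = F j.
Proof.
rewrite mulmx_sumr (bigD1 j) //= mulmxA blockP_tr_mulxx mul1mx big1 ?addr0 //.
by move=> l lj; rewrite mulmxA blockP_tr_mul_neq 1?eq_sym // mul0mx.
Qed.

End BlockProjections.

Section JointObservable.
Variables (R : rcfType) (N n M : nat) (Ms : 'I_n -> nat) (G : gobs R N M).
Variables (E : forall j, gobs R N (Ms j)) (post : forall j, gpost G (E j)).
Local Notation P := (blockP R Ms).

Definition joint_A := \sum_j gpA (post j) *m (P j)^T.
Definition joint_B := \sum_j P j *m gpB (post j) *m (P j)^T.
Definition joint_c := \sum_j P j *m gpc (post j).

Lemma joint_B_psd : psdR joint_B.
Proof. by apply: psdR_sum => j; apply/psdR_congr/gpB_psd. Qed.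

Definition joint_gobs := postprocess G joint_A joint_c joint_B_psd.

Lemma joint_A_block j : joint_A *m P j = gpA (post j).
Proof. exact: sum_mul_blockP. Qed.

Lemma joint_B_block j : (P j)^T *m joint_B *m P j = gpB (post j).
Proof.
rewrite /joint_B (eq_bigr (fun l => P l *m (gpB (post l) *m (P l)^T))) => [|l _].
  by rewrite blockP_tr_mul_sum -mulmxA blockP_tr_mulxx mulmx1.
by rewrite mulmxA.
Qed.

Lemma is_margin_joint j : is_margin joint_gobs (E j).
Proof.
rewrite /is_margin /= (gpK (post j)) (gpL (post j)) (gpm (post j)).
split; first by rewrite -mulmxA joint_A_block.
split; last by rewrite mulmxDr blockP_tr_mul_sum mulmxA -trmx_mul joint_A_block.
by rewrite mulmxDr mulmxDl joint_B_block -joint_A_block trmx_mul !mulmxA.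
Qed.

End JointObservable.

Theorem proposition1 (R : realType) (N n : nat) (hN : (0 < N)%N)
  (Ms : 'I_n -> nat) (E : forall j : 'I_n, gobs R N (Ms j)) :
  gauss_compatible E <->
  exists G : gobs R N (\sum_(l < n) Ms l),
    forall j : 'I_n, is_margin G (E j).
Proof.
split=> [[M [G postG]] | [G margG]].
  exists (joint_gobs (fun j => gpost_of_gpost (postG j))) => j.
  exact: is_margin_joint.
exists _, G => j; have [EK [EL Em]] := margG j.
exact: gpost_of_linear EK EL Em.
Qed.
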